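(* Let $A$ be a symmetric nonnegative $r$-matrix of order $n$ and let $p>1$. If $\lambda\in\mathbb{R}$ and $\mathbf{x}=(x_1,\ldots,x_n)\in\mathbb{S}^{n-1}_p$ satisfy \[ \lambda x_k|x_k|^{p-2}=\frac1r\frac{\partial P_A(\mathbf{x})}{\partial x_k},\qquad k=1,\ldots,n, \] then $|\lambda|\leq\eta^{(p)}(A)$.
   Context: A cubical $r$-matrix of order $n$ is a function $A$ on $[n]^r$ with entries $a_{i_1,\ldots,i_r}$; symmetric means invariant under permutations of indices. $P_A(\mathbf{x})=\sum_{i_1,\ldots,i_r}a_{i_1,\ldots,i_r}x_{i_1}\cdots x_{i_r}$. $\mathbb{S}^{n-1}_p=\{\mathbf{x}\in\mathbb{R}^n:\sum|x_i|^p=1\}$ and $\eta^{(p)}(A)=\max\{|P_A(\mathbf{x})|:\mathbf{x}\in\mathbb{S}^{n-1}_p\}$. The expression $x_k|x_k|^{p-2}$ is interpreted as $0$ when $x_k=0$. *)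

From HB Require Import structures.
From mathcomp Require Import all_boot all_order all_algebra all_fingroup.
From mathcomp Require Import all_classical all_reals all_analysis.
Set Implicit Arguments. Unset Strict Implicit. Unset Printing Implicit Defensive.
Import Order.TTheory GRing.Theory Num.Theory.
Import numFieldNormedType.Exports.
Local Open Scope classical_set_scope.
Local Open Scope ring_scope.

(* A cubical r-matrix of order n over R: a function on [n]^r, where a
   multi-index (i_1,...,i_r) is a function 'I_r -> 'I_n. *)
Definition cubmx (R : Type) (r n : nat) := {ffun 'I_r -> 'I_n} -> R.

Definition symmetric_cubmx (R : Type) (r n : nat) (A : cubmx R r n) : Prop :=
  forall (s : 'S_r) (i : {ffun 'I_r -> 'I_n}), A [ffun j => i (s j)] = A i.

Definition nonneg_cubmx (R : numDomainType) (r n : nat) (A : cubmx R r n) : Prop :=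
  forall i, 0 <= A i.

Definition PA (R : numDomainType) (r n : nat) (A : cubmx R r n) (x : 'rV[R]_n) : R :=
  \sum_(i : {ffun 'I_r -> 'I_n}) A i * \prod_(j < r) x 0 (i j).

Definition lp_sphere (R : realType) (n : nat) (p : R) : set 'rV[R]_n :=
  [set x | \sum_(k < n) `|x 0 k| `^ p = 1].

(* eta^(p)(A) = max { |P_A(x)| : x in S_p^{n-1} } (the max exists by
   compactness; we take the supremum) *)
Definition eta_p (R : realType) (r n : nat) (p : R) (A : cubmx R r n) : R :=
  sup [set `|PA A x| | x in @lp_sphere R n p].

Definition partial (R : realType) (n : nat) (f : 'rV[R]_n -> R) (k : 'I_n)
  (x : 'rV[R]_n) : R := 'D_(delta_mx 0 k) f x.

From HB Require Import structures.
From mathcomp Require Import all_boot all_order all_algebra all_fingroup.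
From mathcomp Require Import all_classical all_reals all_analysis.
From mathcomp Require Import ring.
Import Order.TTheory GRing.Theory Num.Theory.
Import numFieldNormedType.Exports.
Local Open Scope classical_set_scope.
Local Open Scope ring_scope.

(* P_A is homogeneous of degree r, so Euler's identity gives
   sum_k x_k dP_A/dx_k (x) = r P_A(x).  Multiplying the k-th eigen-equation by
   x_k and summing, the left-hand side becomes lambda sum_k |x_k|^p = lambda,
   hence lambda = P_A(x) and |lambda| = |P_A(x)| <= eta^(p)(A) because x lies
   on the sphere. *)

Lemma is_derive_big_seq (R : numFieldType) (V W : normedModType R)
    (I : Type) (s : seq I) (F : I -> V -> W) (dF : I -> W) (x v : V) :
  (forall i, is_derive x v (F i) (dF i)) ->
  is_derive x v (fun y => \sum_(i <- s) F i y) (\sum_(i <- s) dF i).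
Proof.
move=> dFi; elim: s => [|a s IHs].
  under eq_fun do rewrite big_nil.
  by rewrite big_nil -/(cst (0 : W)); apply: is_derive_cst.
under eq_fun do rewrite big_cons.
by rewrite big_cons; apply: is_deriveD.
Qed.

Section Monomials.
Context {R : realType} {n : nat}.
Implicit Types (x v y : 'rV[R]_n) (s : seq 'I_n).

Definition monomial s y : R := \prod_(j <- s) y 0 j.

Fixpoint dmonomial x v s : R :=
  if s is m :: s' then x 0 m * dmonomial x v s' + monomial s' x * v 0 m else 0.

Lemma is_derive_coord x v (m : 'I_n) :
  is_derive x v (fun y : 'rV[R]_n => y 0 m) (v 0 m).
Proof.
have quotE : \forall h \near (0 : R)^', h^-1 *: ((h *: v + x) 0 m - x 0 m) = v 0 m.
  near=> h.
  have h_neq0 : h != 0 by near: h; exact: nbhs_dnbhs_neq.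
  by rewrite !mxE addrK /= [_ *: _]mulrA mulVf // mul1r.
by split; [apply: (is_cvg_near_cst (v 0 m)) | apply/lim_near_cst].
Unshelve. all: by end_near. Qed.

Lemma is_derive_monomial x v s : is_derive x v (monomial s) (dmonomial x v s).
Proof.
elim: s => [|m s IHs] /=.
  rewrite /monomial; under eq_fun do rewrite big_nil.
  by rewrite -/(cst 1); apply: is_derive_cst.
rewrite /monomial; under eq_fun do rewrite big_cons.
by apply: (is_derive_eq (is_deriveM (is_derive_coord x v m) IHs)).
Qed.

Lemma euler_monomial x s :
  \sum_(k < n) x 0 k * dmonomial x (delta_mx 0 k) s = (size s)%:R * monomial s x.
Proof.
elim: s => [|m s IHs] /=.
  by rewrite big1 ?mul0r // => k _; rewrite mulr0.
under eq_bigr do rewrite mulrDr mulrCA.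
rewrite big_split /= -mulr_sumr IHs /monomial big_cons -/(monomial s x).
have -> : \sum_(k < n) x 0 k * (monomial s x * (delta_mx 0 k : 'rV[R]_n) 0 m)
    = x 0 m * monomial s x.
  rewrite (bigD1 m) //= big1 ?addr0 => [|k k_neq_m].
    by rewrite mxE !eqxx mulr1.
  by rewrite mxE eqxx eq_sym (negbTE k_neq_m) !mulr0.
by rewrite mulrSr; ring.
Qed.

End Monomials.

Lemma lp_sphere_coord_le1 {R : realType} {n : nat} (p : R) (y : 'rV[R]_n)
    (m : 'I_n) :
  0 < p -> y \in @lp_sphere R n p -> `|y 0 m| <= 1.
Proof.
rewrite inE => p_gt0 y_sphere; rewrite leNgt; apply/negP => y_gt1.
have : 1 `^ p < `|y 0 m| `^ p.
  by apply: gt0_ltr_powR; rewrite ?nnegrE ?ler01 ?normr_ge0.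
rewrite powR1 -y_sphere (bigD1 m) //= ltNge lerDl.
by rewrite sumr_ge0 // => k _; exact: powR_ge0.
Qed.

Section Form.
Context {R : realType} {r n : nat} (A : cubmx R r n).

Lemma PA_monomialE (y : 'rV[R]_n) :
  PA A y = \sum_i A i * monomial (codom i) y.
Proof. by apply: eq_bigr => i _; rewrite /monomial big_map big_enum. Qed.

Lemma partial_PA (k : 'I_n) (x : 'rV[R]_n) :
  partial (PA A) k x = \sum_i A i * dmonomial x (delta_mx 0 k) (codom i).
Proof.
have -> : PA A = fun y => \sum_(i <- index_enum _) A i * monomial (codom i) y.
  by apply/funext => y; rewrite PA_monomialE.
apply: derive_val; apply: is_derive_big_seq => i.
by have := is_deriveZ (A i) (is_derive_monomial x (delta_mx 0 k) (codom i)).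
Qed.

Lemma euler_PA (x : 'rV[R]_n) :
  \sum_k x 0 k * partial (PA A) k x = r%:R * PA A x.
Proof.
under eq_bigr do rewrite partial_PA mulr_sumr.
rewrite exchange_big PA_monomialE mulr_sumr; apply: eq_bigr => i _.
under eq_bigr do rewrite mulrCA.
by rewrite -mulr_sumr euler_monomial size_codom card_ord mulrCA.
Qed.

Lemma norm_PA_le_eta (p : R) (y : 'rV[R]_n) :
  0 < p -> y \in @lp_sphere R n p -> `|PA A y| <= eta_p p A.
Proof.
move=> p_gt0 y_sphere; apply: ub_le_sup; last by exists y; move: y_sphere; rewrite inE.
exists (\sum_i `|A i|) => _ [z z_sphere <-].
apply: (le_trans (ler_norm_sum _ _ _)); apply: ler_sum => i _.
rewrite normrM -[leRHS]mulr1; apply: ler_wpM2l; first exact: normr_ge0.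
rewrite normr_prod; apply: prodr_ile1 => j _.
by rewrite normr_ge0 (lp_sphere_coord_le1 _ _ _ p_gt0) ?inE.
Qed.

End Form.

Lemma mul_signed_powR {R : realType} (p t : R) :
  p != 0 -> t * (t * `|t| `^ (p - 2)) = `|t| `^ p.
Proof.
move=> p_neq0.
rewrite mulrA -expr2 -real_normK ?num_real // -(powR_mulrn 2 (normr_ge0 t)).
by rewrite -powRD subrKC // (negbTE p_neq0).
Qed.

Theorem proposition9 (R : realType) (r n : nat) (A : cubmx R r n) (p : R)
  (lambda : R) (x : 'rV[R]_n) :
  symmetric_cubmx A -> nonneg_cubmx A -> 1 < p ->
  x \in @lp_sphere R n p ->
  (forall k : 'I_n,
     lambda * (x 0 k * `|x 0 k| `^ (p - 2)) = r%:R^-1 * partial (PA A) k x) ->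
  `|lambda| <= eta_p p A.
Proof.
move=> _ _ p_gt1 x_sphere eigen.
have p_gt0 : 0 < p := lt_trans ltr01 p_gt1.
have lambdaE : lambda = r%:R^-1 * r%:R * PA A x.
  have sphere_sum : \sum_(k < n) `|x 0 k| `^ p = 1 by move: x_sphere; rewrite inE.
  rewrite -mulrA -euler_PA mulr_sumr -[LHS]mulr1 -{1}sphere_sum mulr_sumr.
  apply: eq_bigr => k _.
  by rewrite -(mul_signed_powR _ _ (lt0r_neq0 p_gt0)) mulrCA eigen mulrCA.
apply: le_trans (norm_PA_le_eta A _ _ p_gt0 x_sphere).
(* r%:R^-1 * r%:R is 1, or 0 when r = 0 since 0^-1 = 0 *)
rewrite lambdaE normrM ler_piMl // normrM normfV normr_nat.
by have [->|r_gt0] := posnP r; rewrite ?invr0 ?mul0r ?mulVf ?pnatr_eq0 -?lt0n.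
Qed.
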